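(* Let $D$ be an Eulerian digraph (finite, without loops, parallel arcs or digons), let $\mathcal{F}(D)$ be a cycle decomposition of $D$, and let $v\in V(D)$. Let $\mathcal{C}_v\subseteq\mathcal{F}(D)$ be the set of dicycles of $\mathcal{F}(D)$ passing through $v$, and suppose that in the dicycle intersection graph $CI(D)$ associated with $\mathcal{F}(D)$ the set $\mathcal{C}_v$ induces a simple clique corresponding to the single vertex $v$, i.e. any two distinct dicycles in $\mathcal{C}_v$ have $v$ as their unique common vertex. Then $v\in SV(D)$, i.e. $|N^{+2}(v)|\ge|N^{+}(v)|$.
   Context: All digraphs are finite, with no loops, no parallel arcs and no digons (a digon is a pair of arcs $u\to w$, $w\to u$), so every dicycle has length at least $3$. $N^{+}(v)$ is the set of out-neighbours of $v$; $N^{+2}(v)$ is the set of vertices $w\notin N^{+}(v)\cup\{v\}$ such that $u\to w$ is an arc for some $u\in N^{+}(v)$; $SV(D)$ is the set of vertices $v$ with $|N^{+2}(v)|\ge|N^{+}(v)|$. An Eulerian digraph is a (weakly) connected digraph with $d^{+}(x)=d^{-}(x)$ for all vertices $x$. A cycle decomposition $\mathcal{F}(D)$ is a set of dicycles whose arc sets partition $A(D)$. The dicycle intersection graph $CI(D)$ associated with $\mathcal{F}(D)$ is the multigraph with vertex set $\mathcal{F}(D)$ having, for each pair of distinct dicycles $C,C'$ and each vertex of $D$ lying on both, one edge between $C$ and $C'$. *)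

From mathcomp Require Import all_boot.
Set Implicit Arguments. Unset Strict Implicit. Unset Printing Implicit Defensive.

Section Digraphs.
Variable V : finType.
Variable arc : rel V.

(* no loops (and no parallel arcs, automatically for a relation), no digons *)
Definition simple_digraph : Prop :=
  (forall x, ~~ arc x x) /\ (forall x y, arc x y -> ~~ arc y x).

Definition outN (x : V) : {set V} := [set y | arc x y].
Definition inN (x : V) : {set V} := [set y | arc y x].

Definition outN2 (v : V) : {set V} :=
  [set w | (w \notin outN v) && (w != v) && [exists u, arc v u && arc u w]].

Definition SV : {set V} := [set v | #|outN v| <= #|outN2 v|].

Definition eulerian : Prop :=
  (forall x y : V, connect (fun a b => arc a b || arc b a) x y) /\
  (forall x, #|outN x| = #|inN x|).

Definition dicycle (c : seq V) : bool := [&& c != [::], uniq c & cycle arc c].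

Definition cyc_arc (c : seq V) (u w : V) : bool := (u \in c) && (next c u == w).

Definition cycle_decomposition (F : seq (seq V)) : Prop :=
  (forall c, c \in F -> dicycle c) /\
  (forall u w, arc u w -> count (fun c => cyc_arc c u w) F = 1).

End Digraphs.

From mathcomp Require Import all_boot.

Set Implicit Arguments.
Unset Strict Implicit.
Unset Printing Implicit Defensive.

(* Map each out-neighbour u of v to its successor f(u) on the dicycle of the
   decomposition that carries the arc vu.  Since f(u) shares that dicycle with
   v and differs from v (no digons), the clique condition forbids f(u) from
   lying on the dicycle of any other arc leaving v.  Hence f is injective, and
   f(u) is not an out-neighbour of v (that arc would lie on the same dicycle,
   forcing f(u) = u, a loop); so f embeds N^+(v) into N^{+2}(v). *)

Lemma dicycle_next_arc (V : finType) (arc : rel V) (c : seq V) (u : V) :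
  dicycle arc c -> u \in c -> arc u (next c u).
Proof. by case/and3P=> _ _ cyc_c; apply: next_cycle. Qed.

Section ArcCycle.

Variables (V : finType) (arc : rel V) (F : seq (seq V)).
Hypothesis decF : cycle_decomposition arc F.

Definition arc_index (u w : V) : nat := find (fun c => cyc_arc c u w) F.

Definition arc_cycle (u w : V) : seq V := nth [::] F (arc_index u w).

Lemma arc_cycleP (u w : V) : arc u w ->
  [/\ arc_index u w < size F, u \in arc_cycle u w,
      next (arc_cycle u w) u = w & dicycle arc (arc_cycle u w)].
Proof.
move=> arc_uw; have [cycF countF] := decF.
have hasF : has (fun c => cyc_arc c u w) F by rewrite has_count countF.
have lt_idx : arc_index u w < size F by rewrite -has_find.
have /andP[u_in /eqP next_u] := nth_find [::] hasF.
by split=> //; apply/cycF/mem_nth.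
Qed.

Lemma mem_arc_cycle_target (u w : V) : arc u w -> w \in arc_cycle u w.
Proof. by case/arc_cycleP=> _ u_in next_u _; rewrite -[X in X \in _]next_u mem_next. Qed.

End ArcCycle.

Section OutNeighbourSuccessor.

Variables (V : finType) (arc : rel V) (F : seq (seq V)) (v : V).
Hypotheses (noloop : forall x, ~~ arc x x)
           (nodigon : forall x y, arc x y -> ~~ arc y x)
           (decF : cycle_decomposition arc F).
Hypothesis cliqueF : forall i j, i < size F -> j < size F -> i != j ->
  v \in nth [::] F i -> v \in nth [::] F j ->
  forall x, x \in nth [::] F i -> x \in nth [::] F j -> x = v.

Let arcP := arc_cycleP decF.
Let mem_target := mem_arc_cycle_target decF.

Lemma arc_cycle_out_inj (u u' x : V) : arc v u -> arc v u' -> x != v ->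
  x \in arc_cycle F v u -> x \in arc_cycle F v u' -> u = u'.
Proof.
move=> arc_vu arc_vu' x_neq_v x_in x_in'.
have [lt_i v_in next_u _] := arcP arc_vu.
have [lt_j v_in' next_u' _] := arcP arc_vu'.
have [eq_idx | neq_idx] := eqVneq (arc_index F v u) (arc_index F v u').
  by rewrite -next_u -next_u' /arc_cycle eq_idx.
by move/eqP: x_neq_v; have := cliqueF lt_i lt_j neq_idx v_in v_in' x_in x_in'.
Qed.

Definition out_succ (u : V) : V := next (arc_cycle F v u) u.

Lemma out_succP (u : V) : arc v u ->
  [/\ arc u (out_succ u), out_succ u != v & out_succ u \in arc_cycle F v u].
Proof.
move=> arc_vu; have [_ _ _ dic] := arcP arc_vu.
have arc_u_succ : arc u (out_succ u).
  exact: dicycle_next_arc dic (mem_target arc_vu).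
split=> //; last by rewrite mem_next mem_target.
by apply: contraTneq arc_u_succ => ->; apply: nodigon.
Qed.

Lemma out_succ_inj : {in outN arc v &, injective out_succ}.
Proof.
move=> u u'; rewrite !inE => arc_vu arc_vu' eq_succ.
have [_ succ_neq_v succ_in] := out_succP arc_vu.
have [_ _ succ_in'] := out_succP arc_vu'.
by apply: arc_cycle_out_inj arc_vu arc_vu' succ_neq_v succ_in _; rewrite eq_succ.
Qed.

Lemma out_succ_outN2 (u : V) : u \in outN arc v -> out_succ u \in outN2 arc v.
Proof.
rewrite inE => arc_vu; have [arc_u_succ succ_neq_v succ_in] := out_succP arc_vu.
rewrite inE succ_neq_v andbT; apply/andP; split.
  rewrite inE; apply: contraNN (noloop u) => arc_v_succ.
  suff {2}-> : u = out_succ u by [].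
  exact: arc_cycle_out_inj arc_vu arc_v_succ succ_neq_v succ_in
                            (mem_target arc_v_succ).
by apply/existsP; exists u; rewrite arc_vu.
Qed.

Lemma card_outN_le_outN2 : #|outN arc v| <= #|outN2 arc v|.
Proof.
rewrite -(card_in_imset out_succ_inj); apply/subset_leq_card/subsetP=> w.
by case/imsetP=> u u_out ->; apply: out_succ_outN2.
Qed.

End OutNeighbourSuccessor.

Theorem mainTheorem5 (V : finType) (arc : rel V) (F : seq (seq V)) (v : V) :
  simple_digraph arc ->
  eulerian arc ->
  cycle_decomposition arc F ->
  (forall i j, i < size F -> j < size F -> i != j ->
     v \in nth [::] F i -> v \in nth [::] F j ->
     forall x, x \in nth [::] F i -> x \in nth [::] F j -> x = v) ->
  v \in SV arc.
Proof.
move=> [noloop nodigon] _ decF cliqueF; rewrite inE.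
exact: card_outN_le_outN2 noloop nodigon decF cliqueF.
Qed.
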